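(* Let $(R,\mathfrak{m})$ be a commutative Artinian local ring with identity, $\mathfrak{m}\neq0$ and $\mathfrak{m}^2=0$, and let $q\in R[x]$ be an irreducible GE polynomial. For every integer $n\ge2$: if $n$ is even then $\{2,4,6,\dots,n-2,n\}\subseteq L(q^n)$; if $n$ is odd then $\{3,5,7,\dots,n-2,n\}\subseteq L(q^n)$.
   Context: A generalized Eisenstein (GE) polynomial is a nonconstant monic polynomial $x^d+f_{d-1}x^{d-1}+\dots+f_0\in R[x]$ with $f_i\in\mathfrak{m}$ for all $i<d$. A nonunit polynomial is irreducible if in any factorization into two polynomials one factor is a unit of $R[x]$. A positive integer $k$ is a length of $f$ if $f$ is a product of $k$ irreducible polynomials; $L(f)$ denotes the set of lengths of $f$. *)

From HB Require Import structures.
From mathcomp Require Import all_boot all_order all_algebra.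
Set Implicit Arguments. Unset Strict Implicit. Unset Printing Implicit Defensive.
Import Order.TTheory GRing.Theory Num.Theory.
Local Open Scope ring_scope.

Section Defs.
Variable R : comUnitRingType.

(* The non-units of R; in a local ring this is the maximal ideal m. *)
Definition nonunit (x : R) : Prop := x \isn't a GRing.unit.

(* R is local: the non-units form an ideal (closed under addition;
   closure under multiplication by ring elements is automatic). *)
Definition is_local : Prop :=
  forall x y : R, nonunit x -> nonunit y -> nonunit (x + y).

Definition is_ideal (I : R -> Prop) : Prop :=
  [/\ I 0, (forall x y, I x -> I y -> I (x + y)) & (forall r x, I x -> I (r * x))].

Definition artinian : Prop :=
  forall I : nat -> R -> Prop,
    (forall n, is_ideal (I n)) ->
    (forall n x, I n.+1 x -> I n x) ->
    exists N, forall n, (N <= n)%N -> forall x, I n x <-> I N x.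

Definition punit (f : {poly R}) : Prop := exists g : {poly R}, f * g = 1.

Definition pirreducible (f : {poly R}) : Prop :=
  ~ punit f /\ forall g h : {poly R}, f = g * h -> punit g \/ punit h.

Definition is_length (f : {poly R}) (k : nat) : Prop :=
  (0 < k)%N /\
  exists s : seq {poly R},
    [/\ size s = k, (forall g, g \in s -> pirreducible g) & f = \prod_(g <- s) g].

Definition GE (f : {poly R}) : Prop :=
  [/\ (1 < size f)%N, f \is monic & forall i, (i < (size f).-1)%N -> nonunit f`_i].

End Defs.

From HB Require Import structures.
From mathcomp Require Import all_boot all_order all_algebra.
From mathcomp Require Import zify.
Set Implicit Arguments.
Unset Strict Implicit.
Import GRing.Theory.
Local Open Scope ring_scope.

(* Fix a nonzero a in m. For e >= 2 the constant term of q^e lies in m^2 = 0,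
   so q^e + a and q^e - a are GE polynomials with nonzero constant term. Such a
   polynomial is irreducible: in a factorization, the least and the greatest
   indices of unit coefficients of the two factors both add up to the degree,
   so each factor has a single unit coefficient. If it is the constant term, the
   factor is a unit plus a polynomial over m, hence a unit since m[x]^2 = 0;
   otherwise both constant terms lie in m and their product, the constant term,
   vanishes. As a^2 = 0, q^(2e) = (q^e + a)(q^e - a), so q^n = (q^e + a)(q^e - a)
   q^(k-2) has length k when n - k = 2(e - 1). *)

Section LocalRing.
Variable R : comUnitRingType.
Hypothesis Hloc : is_local R.

Lemma nonunit0 : nonunit (0 : R).
Proof. by rewrite /nonunit unitr0. Qed.

Lemma nonunitMl (x y : R) : nonunit x -> nonunit (x * y).
Proof. by rewrite /nonunit unitrM => /negbTE ->. Qed.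

Lemma nonunitMr (x y : R) : nonunit y -> nonunit (x * y).
Proof. by rewrite /nonunit unitrM => /negbTE ->; rewrite andbF. Qed.

Lemma nonunitN (x : R) : nonunit x -> nonunit (- x).
Proof. by move=> hx; rewrite -mulN1r; apply: nonunitMr. Qed.

Lemma nonunit_sum (I : Type) (r : seq I) (P : pred I) (F : I -> R) :
  (forall i, P i -> nonunit (F i)) -> nonunit (\sum_(i <- r | P i) F i).
Proof. by move=> hF; apply: big_ind => //; exact: nonunit0. Qed.

Lemma unitrD_nonunit (u x : R) :
  u \is a GRing.unit -> nonunit x -> (u + x) \is a GRing.unit.
Proof.
move=> hu hx; apply/negPn/negP => hux.
have : nonunit (u + x + - x) by apply: Hloc => //; apply: nonunitN.
by rewrite addrK /nonunit hu.
Qed.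

Lemma unit_coef_lt_size (p : {poly R}) i : p`_i \is a GRing.unit -> (i < size p)%N.
Proof. by apply: contraTT; rewrite -leqNgt => /(nth_default 0) ->; rewrite unitr0. Qed.

Lemma unit_coefM (p r : {poly R}) s t :
  p`_s \is a GRing.unit -> r`_t \is a GRing.unit ->
  (forall j, (j <= s + t)%N -> j != s -> nonunit p`_j \/ nonunit r`_(s + t - j)) ->
  (p * r)`_(s + t) \is a GRing.unit.
Proof.
move=> ps rt hj; have ls : (s < (s + t).+1)%N by lia.
rewrite coefM (bigD1 (Ordinal ls)) //=; apply: unitrD_nonunit.
  by rewrite addKn unitrM ps rt.
apply: nonunit_sum => j nes.
have [|] := hj j (ltn_ord j) nes; [exact: nonunitMl | exact: nonunitMr].
Qed.

Lemma unit_coefM_min (p r : {poly R}) s t :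
  p`_s \is a GRing.unit -> r`_t \is a GRing.unit ->
  (forall j, p`_j \is a GRing.unit -> (s <= j)%N) ->
  (forall j, r`_j \is a GRing.unit -> (t <= j)%N) ->
  (p * r)`_(s + t) \is a GRing.unit.
Proof.
move=> ps rt mins mint; apply: unit_coefM => // j le ne.
have [lt|ge] := ltnP j s.
  by left; apply/negP => /mins; lia.
by right; apply/negP => /mint; lia.
Qed.

Lemma unit_coefM_max (p r : {poly R}) s t :
  p`_s \is a GRing.unit -> r`_t \is a GRing.unit ->
  (forall j, p`_j \is a GRing.unit -> (j <= s)%N) ->
  (forall j, r`_j \is a GRing.unit -> (j <= t)%N) ->
  (p * r)`_(s + t) \is a GRing.unit.
Proof.
move=> ps rt maxs maxt; apply: unit_coefM => // j le ne.
have [lt|ge] := ltnP s j.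
  by left; apply/negP => /maxs; lia.
by right; apply/negP => /maxt; lia.
Qed.

Lemma unit_coefMl (p r : {poly R}) k :
  (p * r)`_k \is a GRing.unit -> exists i, p`_i \is a GRing.unit.
Proof.
move=> prk; case: (boolP [exists i : 'I_(size p), p`_i \is a GRing.unit]).
  by case/existsP=> i; exists i.
move/existsPn=> nounit; suff : nonunit (p * r)`_k by rewrite /nonunit prk.
rewrite coefM; apply: nonunit_sum => j _; apply: nonunitMl.
have [lt|ge] := ltnP j (size p); first exact: (nounit (Ordinal lt)).
by rewrite nth_default //; exact: nonunit0.
Qed.

Lemma GE_unit_coef (f : {poly R}) i :
  GE f -> f`_i \is a GRing.unit -> i = (size f).-1.
Proof.
move=> [_ _ cf] fi; have := unit_coef_lt_size fi.
have [lt|gt|//] := ltngtP i (size f).-1; last by lia.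
by have := cf _ lt; rewrite /nonunit fi.
Qed.

Lemma GE_mul (p r : {poly R}) : GE p -> GE r -> GE (p * r).
Proof.
move=> [sp mp cp] [sr mr cr].
have r0 : r != 0 by rewrite -size_poly_gt0; lia.
have spr := size_monicM mp r0.
split; [by rewrite spr; lia | by rewrite monicMl |].
rewrite spr => i lti; rewrite coefM; apply: nonunit_sum => j _.
have [lt|ge] := ltnP j (size p).-1; first by apply: nonunitMl; apply: cp.
by apply: nonunitMr; apply: cr; have := ltn_ord j; lia.
Qed.

Lemma GE_exp (p : {poly R}) e : GE p -> (0 < e)%N -> GE (p ^+ e).
Proof.
move=> Gp; elim: e => // [[|e]] IH _; first by rewrite expr1.
by rewrite exprS; apply: GE_mul => //; apply: IH.
Qed.

Lemma GE_addC (p : {poly R}) c : GE p -> nonunit c -> GE (p + c%:P).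
Proof.
move=> [sp mp cp] hc.
have ltc : (size c%:P < size p)%N by rewrite size_polyC (leq_ltn_trans (leq_b1 _) sp).
split; first by rewrite size_polyDl.
  by rewrite monicE lead_coefDl // -monicE.
rewrite (size_polyDl ltc) => i lti; rewrite coefD coefC; apply: Hloc; first exact: cp.
by case: (i == 0%N) => //; exact: nonunit0.
Qed.

Hypothesis Hm2 : forall a b : R, nonunit a -> nonunit b -> a * b = 0.

(* [c^-1 (1 - c^-1 N)] inverts [c + N] since [N * N = 0]. *)
Lemma punit_unit_coef0 (p : {poly R}) :
  p`_0 \is a GRing.unit -> (forall i, (0 < i)%N -> nonunit p`_i) -> punit p.
Proof.
move=> p0 hp; set c := p`_0; set N := p - c%:P.
have hN i : nonunit N`_i.
  case: i => [|i]; first by rewrite /N coefB coefC /= subrr; exact: nonunit0.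
  by rewrite /N coefB coefC /= subr0; apply: hp.
have NN : N * N = 0.
  by apply/polyP => i; rewrite coefM coef0; apply: big1 => j _; exact: Hm2.
have cc : c%:P * c^-1%:P = 1 by rewrite -polyCM mulrV.
exists (c^-1%:P * (1 - c^-1%:P * N)).
have -> : p = c%:P + N by rewrite /N addrC subrK.
rewrite mulrA mulrDl cc (mulrC N) [LHS]mulrC -subr_sqr expr1n exprMn.
by rewrite [N ^+ 2]expr2 NN mulr0 subr0.
Qed.

Lemma GE_not_punit (f : {poly R}) : GE f -> ~ punit f.
Proof.
move=> [sf mf _] [g fg]; have g0 : g != 0.
  by apply: contra_eq_neq fg => ->; rewrite mulr0 eq_sym oner_neq0.
have := size_monicM mf g0; rewrite fg size_poly1.
by move: g0; rewrite -size_poly_gt0; lia.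
Qed.

Lemma GE_irreducible (f : {poly R}) : GE f -> f`_0 != 0 -> pirreducible f.
Proof.
move=> Gf f0; split; first exact: GE_not_punit.
move=> g h fE; have [_ mf _] := Gf.
have fd : f`_(size f).-1 \is a GRing.unit by rewrite -lead_coefE (monicP mf) unitr1.
have exg : exists i, g`_i \is a GRing.unit.
  by apply: (@unit_coefMl g h (size f).-1); rewrite -fE.
have exh : exists i, h`_i \is a GRing.unit.
  by apply: (@unit_coefMl h g (size f).-1); rewrite mulrC -fE.
have bounded (p : {poly R}) i : p`_i \is a GRing.unit -> (i <= size p)%N.
  by move/unit_coef_lt_size/ltnW.
case: (ex_minnP exg) => s gs mins; case: (ex_maxnP exg (@bounded g)) => S gS maxS.
case: (ex_minnP exh) => t ht mint; case: (ex_maxnP exh (@bounded h)) => T hT maxT.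
have st : (s + t = (size f).-1)%N.
  by apply: GE_unit_coef Gf _; rewrite fE; exact: unit_coefM_min.
have ST : (S + T = (size f).-1)%N.
  by apply: GE_unit_coef Gf _; rewrite fE; exact: unit_coefM_max.
have sS := mins _ gS; have tT := mint _ hT.
have [s0|spos] := posnP s.
  left; apply: punit_unit_coef0; first by rewrite s0 in gs.
  by move=> i i0; apply/negP => /maxS; lia.
have [t0|tpos] := posnP t.
  right; apply: punit_unit_coef0; first by rewrite t0 in ht.
  by move=> i i0; apply/negP => /maxT; lia.
move: f0; rewrite fE coef0M Hm2 ?eqxx //.
  by apply/negP => /mins; lia.
by apply/negP => /mint; lia.
Qed.

Lemma GE_exp_addC_irreducible (q : {poly R}) e c :
  GE q -> (1 < e)%N -> nonunit c -> c != 0 -> pirreducible (q ^+ e + c%:P).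
Proof.
move=> Gq e2 hc c0; apply: GE_irreducible.
  by apply: GE_addC => //; apply: GE_exp => //; lia.
have [sq _ cq] := Gq; have q0 : nonunit q`_0 by apply: cq; lia.
rewrite coefD coefC /= -horner_coef0 horner_exp horner_coef0.
by rewrite -(subnKC e2) exprD expr2 (Hm2 q0 q0) mul0r add0r.
Qed.

End LocalRing.

Section Lengths.
Variable R : comUnitRingType.

Lemma is_length_irr (q : {poly R}) : pirreducible q -> is_length q 1.
Proof.
move=> irr; split=> //; exists [:: q]; split=> //; last by rewrite big_seq1.
by move=> g; rewrite inE => /eqP ->.
Qed.

Lemma is_lengthM (f g : {poly R}) i j :
  is_length f i -> is_length g j -> is_length (f * g) (i + j).
Proof.
move=> [i0 [s [si irrs ->]]] [_ [t [tj irrt ->]]].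
split; first by rewrite addn_gt0 i0.
exists (s ++ t); split; [by rewrite size_cat si tj | | by rewrite big_cat].
by move=> h; rewrite mem_cat => /orP [/irrs | /irrt].
Qed.

Lemma is_lengthMX (f q : {poly R}) i j :
  is_length f i -> pirreducible q -> is_length (f * q ^+ j) (i + j).
Proof.
move=> lf irr; elim: j => [|j IH]; first by rewrite expr0 mulr1 addn0.
by rewrite exprSr mulrA addnS -addn1; apply: is_lengthM => //; exact: is_length_irr.
Qed.

End Lengths.

Theorem lemma4p5 (R : comUnitRingType)
  (Hloc : is_local R) (Hart : artinian R)
  (Hm_nz : exists a : R, nonunit a /\ a != 0)
  (Hm2 : forall a b : R, nonunit a -> nonunit b -> a * b = 0)
  (q : {poly R}) (Hq_GE : GE q) (Hq_irr : pirreducible q)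
  (n : nat) (Hn : (2 <= n)%N) :
  forall k : nat, (2 <= k <= n)%N -> odd k = odd n -> is_length (q ^+ n) k.
Proof.
move=> k /andP [k2 kn] par.
have [ekn|nek] := eqVneq k n.
  have := is_lengthMX (n.-1) (is_length_irr Hq_irr) Hq_irr.
  by rewrite -exprS add1n prednK ?ekn //; lia.
have [a [ma a0]] := Hm_nz.
have evenB : odd (n - k) = false by rewrite oddB // par addbb.
have halfB := odd_double_half (n - k); rewrite evenB -mul2n in halfB.
set e := ((n - k)./2).+1.
have e2 : (1 < e)%N by rewrite /e; lia.
have irr c : nonunit c -> c != 0 -> pirreducible (q ^+ e + c%:P).
  by move=> mc c0; exact: GE_exp_addC_irreducible.
have sq : (q ^+ e + a%:P) * (q ^+ e + (- a)%:P) = q ^+ (e + e).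
  rewrite polyCN mulrC -subr_sqr [a%:P ^+ 2]expr2 -polyCM Hm2 // subr0.
  by rewrite -exprM muln2 addnn.
have -> : q ^+ n = (q ^+ e + a%:P) * (q ^+ e + (- a)%:P) * q ^+ (k - 2).
  by rewrite sq -exprD; congr (_ ^+ _); rewrite /e; lia.
have na0 : - a != 0 by rewrite oppr_eq0.
have := is_lengthMX (k - 2) (is_lengthM (is_length_irr (irr _ ma a0))
  (is_length_irr (irr _ (nonunitN ma) na0))) Hq_irr.
by rewrite subnKC.
Qed.
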